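(* If $\mathbf{X}\in\{0,1\}^{m\times n}$ is totally balanced, then $\mathcal{S}^Q(\mathbf{X})$ is totally balanced for every nonempty $Q\subseteq\mathrm{supp}(\mathbf{X})$.
   Context: $\mathrm{supp}(\mathbf{X})=\{(i,j):x_{i,j}=1\}$. For $t\ge 3$, a $t\times t$ cycle matrix is a binary matrix which, after permuting rows and columns, equals the matrix $\mathbf{C}_t$ whose $1$s are exactly at $(i,i),(i,i+1)$ for $i\in[t-1]$ and at $(t,1),(t,t)$. A binary matrix is totally balanced if it has no submatrix (obtained by deleting rows and columns) that is a $t\times t$ cycle matrix for any $t\ge 3$. Stretching: for a nonempty $Q=\{(\ell_1,k_1),\dots,(\ell_q,k_q)\}\subseteq\mathrm{supp}(\mathbf{X})$ listed in lexicographic order (by row index, then column index), $\mathcal{S}^Q(\mathbf{X})$ is the $(m+q)\times(n+q)$ binary matrix whose top-left $m\times n$ block is $\mathbf{X}$, whose entries at $(\ell_t,n+t)$, $(m+t,k_t)$ and $(m+t,n+t)$ equal $1$ for each $t\in[q]$, and all of whose other entries are $0$. *)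

From mathcomp Require Import all_boot all_order all_algebra all_fingroup.
Set Implicit Arguments. Unset Strict Implicit. Unset Printing Implicit Defensive.

(* Binary matrices are represented as 'M[bool]_(m, n); entry true = 1. *)

Definition supp m n (X : 'M[bool]_(m, n)) : {set 'I_m * 'I_n} :=
  [set p | X p.1 p.2].

Definition cycleC (t : nat) : 'M[bool]_t :=
  \matrix_(i < t, j < t)
    [|| (i : nat) == j, ((i : nat).+1 < t) && ((j : nat) == i.+1)
      | ((i : nat).+1 == t) && ((j : nat) == 0)].

Definition is_cycle_matrix t (Y : 'M[bool]_t) : Prop :=
  exists (s r : {perm 'I_t}), row_perm s (col_perm r Y) = cycleC t.

(* Submatrix obtained by deleting rows/columns: keep strictly increasing
   row indices f and column indices g. *)
Definition submx_of m n p q (X : 'M[bool]_(m, n)) (Y : 'M[bool]_(p, q)) : Prop :=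
  exists (f : 'I_p -> 'I_m) (g : 'I_q -> 'I_n),
    {mono f : i j / (i < j)%N} /\ {mono g : i j / (i < j)%N} /\
    forall i j, Y i j = X (f i) (g j).

Definition totally_balanced m n (X : 'M[bool]_(m, n)) : Prop :=
  forall t (Y : 'M[bool]_t), 3 <= t -> submx_of X Y -> ~ is_cycle_matrix Y.

Definition lexle m n (a b : 'I_m * 'I_n) : bool :=
  ((a.1 : nat) < b.1) || (((a.1 : nat) == b.1) && ((a.2 : nat) <= b.2)).

Definition lexlist m n (Q : {set 'I_m * 'I_n}) : seq ('I_m * 'I_n) :=
  sort (@lexle m n) (enum Q).

(* Stretching S^Q(X), an (m+q) x (n+q) matrix with q = #|Q|.
   Using 0-indexing: the t-th element (l_t,k_t) (t < q) gives ones at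
   (l_t, n+t), (m+t, k_t), (m+t, n+t). *)
Definition stretch m n (X : 'M[bool]_(m, n)) (Q : {set 'I_m * 'I_n})
  : 'M[bool]_(m + #|Q|, n + #|Q|) :=
  let L := map (fun p : 'I_m * 'I_n => ((p.1 : nat), (p.2 : nat))) (lexlist Q) in
  \matrix_(i, j)
    match split i, split j with
    | inl i', inl j' => X i' j'
    | inl i', inr t  => (nth (0, 0) L t).1 == i'
    | inr t, inl j'  => (nth (0, 0) L t).2 == j'
    | inr t, inr t'  => t == t'
    end.

From mathcomp Require Import all_boot all_order all_algebra all_fingroup.
From mathcomp Require Import zify.

Set Implicit Arguments. Unset Strict Implicit. Unset Printing Implicit Defensive.

(* A cycle matrix has at least two ones in every row and every column, but no
   2 x 2 all-ones submatrix.  In a submatrix Y of S^Q(X) with these three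
   properties, a new row m+t would need both of its ones, at columns n+t and
   k_t; column n+t would then need its other one, at row l_t, and rows
   {m+t, l_t} with columns {n+t, k_t} form an all-ones rectangle because
   (l_t, k_t) lies in supp X.  So Y only uses old rows, and then a new column
   n+t has at most one one.  Hence Y is a submatrix of X. *)

Section Patterns.
Variables (p q : nat) (Y : 'M[bool]_(p, q)).

Definition two_ones_per_row :=
  forall i, exists j j', [/\ j != j', Y i j & Y i j'].

Definition two_ones_per_col :=
  forall j, exists i i', [/\ i != i', Y i j & Y i' j].

Definition rectangle_free :=
  forall i i' j j', i != i' -> j != j' ->
  Y i j -> Y i j' -> Y i' j -> Y i' j' -> False.

End Patterns.

Section PatternsPerm.
Variables (p q : nat) (Y : 'M[bool]_(p, q)).
Variables (s : {perm 'I_p}) (r : {perm 'I_q}).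

Lemma two_ones_per_row_perm :
  two_ones_per_row (row_perm s (col_perm r Y)) -> two_ones_per_row Y.
Proof.
move=> h i; have [j [j' [jj' Yj Yj']]] := h (s^-1 i)%g.
exists (r j), (r j'); rewrite !mxE permKV in Yj Yj'.
by rewrite (inj_eq perm_inj).
Qed.

Lemma two_ones_per_col_perm :
  two_ones_per_col (row_perm s (col_perm r Y)) -> two_ones_per_col Y.
Proof.
move=> h j; have [i [i' [ii' Yi Yi']]] := h (r^-1 j)%g.
exists (s i), (s i'); rewrite !mxE permKV in Yi Yi'.
by rewrite (inj_eq perm_inj).
Qed.

Lemma rectangle_free_perm :
  rectangle_free (row_perm s (col_perm r Y)) -> rectangle_free Y.
Proof.
move=> h i i' j j' ii' jj' Yij Yij' Yi'j Yi'j'.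
apply: (h (s^-1 i)%g (s^-1 i')%g (r^-1 j)%g (r^-1 j')%g);
  by rewrite ?mxE ?permKV ?(inj_eq perm_inj).
Qed.

End PatternsPerm.

Lemma cycleC_support t (i j : 'I_t) : cycleC t i j ->
  (j : nat) = i \/ ((i : nat).+1 < t /\ (j : nat) = i.+1) \/
  ((i : nat).+1 = t /\ (j : nat) = 0).
Proof.
by rewrite mxE => /or3P [/eqP e|/andP [h /eqP e]|/andP [/eqP h /eqP e]]; lia.
Qed.

Lemma cycleC_rectangle_free t : 3 <= t -> rectangle_free (cycleC t).
Proof.
move=> t3 i i' j j' /eqP ii' /eqP jj'.
move=> /cycleC_support h1 /cycleC_support h2 /cycleC_support h3 /cycleC_support h4.
have {}ii' : (i : nat) <> i' by move=> e; apply/ii'/ord_inj.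
have {}jj' : (j : nat) <> j' by move=> e; apply/jj'/ord_inj.
have := ltn_ord i; have := ltn_ord i'; have := ltn_ord j; have := ltn_ord j'.
lia.
Qed.

Lemma cycleC_two_ones_per_row t : 3 <= t -> two_ones_per_row (cycleC t).
Proof.
case: t => [|[|[|t]]] // _ i.
exists i, (inord (if i.+1 < t.+3 then i.+1 else 0)).
have hi := ltn_ord i.
rewrite !mxE eqxx /=; split => //.
  apply/eqP => /(congr1 val) /=; rewrite inordK; case: ifP => // h; lia.
rewrite inordK; last by case: ifP.
case: ifP => h; apply/orP; right; apply/orP; [left|right];
  apply/andP; split => //; lia.
Qed.

Lemma cycleC_two_ones_per_col t : 3 <= t -> two_ones_per_col (cycleC t).
Proof.
case: t => [|[|[|t]]] // _ j.
exists j, (inord (if (j : nat) == 0 then t.+2 else j.-1)).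
have hj := ltn_ord j.
rewrite !mxE eqxx /=; split => //.
  apply/eqP => /(congr1 val) /=; rewrite inordK; case: ifP => /eqP h; lia.
rewrite inordK; last by case: ifP => _; lia.
case: ifP => /eqP h; apply/orP; right; apply/orP; [right|left];
  apply/andP; split; apply/eqP; lia.
Qed.

Lemma cycle_matrix_patterns t (Y : 'M[bool]_t) : 3 <= t -> is_cycle_matrix Y ->
  [/\ two_ones_per_row Y, two_ones_per_col Y & rectangle_free Y].
Proof.
move=> t3 [s [r Ecyc]]; split.
- apply: (two_ones_per_row_perm (s := s) (r := r)).
  by rewrite Ecyc; apply: cycleC_two_ones_per_row.
- apply: (two_ones_per_col_perm (s := s) (r := r)).
  by rewrite Ecyc; apply: cycleC_two_ones_per_col.
- apply: (rectangle_free_perm (s := s) (r := r)).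
  by rewrite Ecyc; apply: cycleC_rectangle_free.
Qed.

Lemma inj_two_values (A B : eqType) (h : A -> B) (P : pred A) (u v : B) x x' :
  injective h -> x != x' -> P x -> P x' ->
  (forall y, P y -> (h y == u) || (h y == v)) ->
  (exists2 y, P y & h y = u) /\ (exists2 y, P y & h y = v).
Proof.
move=> hinj xx' Px Px' cover.
have hit w w' : (forall y, P y -> (h y == w') || (h y == w)) ->
    exists2 y, P y & h y = w.
  move=> cover'; case hxw: (h x == w); first by exists x; last apply/eqP.
  exists x' => //; move: (cover' x' Px'); have := cover' x Px.
  rewrite hxw orbF => /eqP <-; rewrite (inj_eq hinj) eq_sym (negbTE xx').
  by move/eqP.
split; last exact: hit cover.
by apply: (hit u v) => y /cover; rewrite orbC.
Qed.

Lemma ltn_mono_ord_inj p q (f : 'I_p -> 'I_q) :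
  {mono f : i j / (i < j)%N} -> injective f.
Proof.
move=> fm x y fxy; apply/ord_inj/eqP.
by rewrite eqn_leq leqNgt -fm fxy ltnn leqNgt -fm fxy ltnn.
Qed.

Section Stretch.
Variables (m n : nat) (X : 'M[bool]_(m, n)) (Q : {set 'I_m * 'I_n}).

Lemma size_lexlist : size (lexlist Q) == #|Q|.
Proof. by rewrite /lexlist size_sort cardE. Qed.

Definition stretch_point (t : 'I_#|Q|) : 'I_m * 'I_n :=
  tnth (Tuple size_lexlist) t.

Lemma stretch_point_in t : stretch_point t \in Q.
Proof.
by have := mem_tnth t (Tuple size_lexlist); rewrite mem_sort mem_enum.
Qed.

Lemma nth_stretch_point (t : 'I_#|Q|) :
  nth (0, 0)
    [seq ((pt.1 : nat), (pt.2 : nat)) | pt : 'I_m * 'I_n <- lexlist Q] t =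
  ((stretch_point t).1 : nat, (stretch_point t).2 : nat).
Proof.
rewrite (nth_map (stretch_point t)) ?(eqP size_lexlist) //.
by have /= <- := tnth_nth (stretch_point t) (Tuple size_lexlist) t.
Qed.

Lemma stretch_lshift i j : stretch X Q (lshift _ i) (lshift _ j) = X i j.
Proof. by rewrite mxE (unsplitK (inl _ i)) (unsplitK (inl _ j)). Qed.

Lemma stretch_rshift_row t j :
  stretch X Q (rshift m t) j =
  (j == rshift n t) || (j == lshift _ (stretch_point t).2).
Proof.
rewrite mxE (unsplitK (inr _ t)) nth_stretch_point /=.
by case: split_ordP => [j' | t'] ->; rewrite ?eq_shift ?orbF eq_sym.
Qed.

Lemma stretch_rshift_col i t :
  stretch X Q i (rshift n t) =
  (i == rshift m t) || (i == lshift _ (stretch_point t).1).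
Proof.
rewrite mxE (unsplitK (inr _ t)) nth_stretch_point /=.
by case: split_ordP => [i' | t'] ->; rewrite ?eq_shift ?orbF eq_sym.
Qed.

Hypothesis QX : Q \subset supp X.

Section Submatrix.
Variables (p q : nat) (Y : 'M[bool]_(p, q)).
Variables (f : 'I_p -> 'I_(m + #|Q|)) (g : 'I_q -> 'I_(n + #|Q|)).
Hypotheses (finj : injective f) (ginj : injective g).
Hypothesis YE : forall i j, Y i j = stretch X Q (f i) (g j).
Hypotheses (rowY : two_ones_per_row Y) (colY : two_ones_per_col Y).
Hypothesis rectY : rectangle_free Y.

Lemma submx_stretch_rows_old a : f a < m.
Proof.
case: (split_ordP (f a)) => // t fa; exfalso; set pt := stretch_point t.
have [b [b' [bb' Yab Yab']]] := rowY a.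
have row_a j : Y a j -> (g j == rshift n t) || (g j == lshift _ pt.2).
  by rewrite YE fa stretch_rshift_row.
have [[jc Yajc gjc] [jk Yajk gjk]] := inj_two_values ginj bb' Yab Yab' row_a.
have [i [i' [ii' Yijc Yi'jc]]] := colY jc.
have col_jc k : Y k jc -> (f k == rshift m t) || (f k == lshift _ pt.1).
  by rewrite YE gjc stretch_rshift_col.
have [_ [il Yiljc fil]] := inj_two_values finj ii' Yijc Yi'jc col_jc.
have Yiljk : Y il jk.
  rewrite YE fil gjk stretch_lshift.
  by move/subsetP/(_ _ (stretch_point_in t)): QX; rewrite inE.
apply: (rectY (i := a) (i' := il) (j := jc) (j' := jk)) => //.
- by rewrite -(inj_eq finj) fa fil eq_rlshift.
- by rewrite -(inj_eq ginj) gjc gjk eq_rlshift.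
Qed.

Lemma submx_stretch_cols_old b : g b < n.
Proof.
case: (split_ordP (g b)) => // t gb; exfalso.
have [i [i' [ii' Yib Yi'b]]] := colY b.
have col_b k :
    Y k b -> (f k == rshift m t) || (f k == lshift _ (stretch_point t).1).
  by rewrite YE gb stretch_rshift_col.
have [[a _ fa] _] := inj_two_values finj ii' Yib Yi'b col_b.
by have := submx_stretch_rows_old a; rewrite fa /= ltnNge leq_addr.
Qed.

End Submatrix.

Lemma submx_stretch_submx p q (Y : 'M[bool]_(p, q)) :
  two_ones_per_row Y -> two_ones_per_col Y -> rectangle_free Y ->
  submx_of (stretch X Q) Y -> submx_of X Y.
Proof.
move=> rowY colY rectY [f [g [fm [gm YE]]]].
have finj := ltn_mono_ord_inj fm; have ginj := ltn_mono_ord_inj gm.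
pose f' a := Ordinal (submx_stretch_rows_old finj ginj YE rowY colY rectY a).
pose g' b := Ordinal (submx_stretch_cols_old finj ginj YE rowY colY rectY b).
exists f', g'; split; [exact: fm | split; [exact: gm | move=> i j]].
by rewrite YE -stretch_lshift; congr (stretch X Q _ _); apply: ord_inj.
Qed.

End Stretch.

Theorem lemma3 (m n : nat) (X : 'M[bool]_(m, n)) (Q : {set 'I_m * 'I_n}) :
  totally_balanced X ->
  Q != set0 -> Q \subset supp X ->
  totally_balanced (stretch X Q).
Proof.
move=> tbX _ QX t Y t3 YS Ycyc.
have [rowY colY rectY] := cycle_matrix_patterns t3 Ycyc.
exact: tbX t Y t3 (submx_stretch_submx QX rowY colY rectY YS) Ycyc.
Qed.
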